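(* Let $m\ge7$ with $m\equiv3\pmod4$, let $N=3^m-1$ and $v=\frac{3^m-1}{2}-3^{(m-1)/2}-1$. Then $\gcd(v,N)=1$, and for every integer $i$ with $0\le i\le\frac{3^{(m-1)/2}+1}{4}+1$, the $3$-weight of $v(1+2i)\bmod N$ is congruent to $1$ modulo $4$ (i.e. the $3$-adic digit vector of $v(1+2i)\bmod N$ lies in $S_1(m)$).
   Context: For an integer $i$, $i\bmod N$ is the unique $s\in\{0,\dots,N-1\}$ with $N\mid i-s$. For $0\le s\le 3^m-1$ with $3$-adic expansion $s=\sum_{j=0}^{m-1}s_j3^j$, $s_j\in\{0,1,2\}$, the $3$-weight is $\mathrm{wt}_3(s)=\sum_j s_j$. $S_j(m)=\{(i_0,\dots,i_{m-1})\in\{0,1,2\}^m:\sum i_k\equiv j\pmod 4\}$. *)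

From mathcomp Require Import all_boot.

(* 3-weight of s, using its m-digit 3-adic expansion s = sum_{j<m} s_j 3^j
   (meaningful for 0 <= s <= 3^m - 1): sum of the digits s_j. *)
Definition wt3 (m s : nat) : nat := \sum_(j < m) ((s %/ 3 ^ j) %% 3).

From mathcomp Require Import all_boot zify.

(* Write m = 2k + 1 and P = 3^k = 4a + 3 (k is odd).  Then N = 2H, where H has
   base-P digits (A, A, 1) with A = (P - 1)/2, and v = H - (P + 1).  For odd u,
   H u = H mod 2H, so v u mod N = H - (P + 1) u.  For u <= A this number has
   base-P digits (A - u, A - u, 1): its 3-weight is 2 wt(A - u) + 1, and
   wt(A - u) is even because a 3-weight has the parity of the number.  For
   u = A + c with c = 2, 4 the digits are the complements P - 1 - x of
   x = c - 1 and x = c (top digit 0), so the weight is 4k - wt(c - 1) - wt(c)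
   = 4k - 3. *)

Lemma wt3_0n s : wt3 0 s = 0.
Proof. by rewrite /wt3 big_ord0. Qed.

Lemma wt3_n0 n : wt3 n 0 = 0.
Proof. by rewrite /wt3 big1 // => j _; rewrite div0n. Qed.

Lemma wt3S n s : wt3 n.+1 s = s %% 3 + wt3 n (s %/ 3).
Proof.
rewrite /wt3 big_ord_recl /= expn0 divn1; congr (_ + _).
by apply: eq_bigr => j _; rewrite /bump leq0n add1n expnS -divnMA mulnC.
Qed.

Lemma wt3_digit n r q : r < 3 -> wt3 n.+1 (r + 3 * q) = r + wt3 n q.
Proof.
move=> r_lt3; rewrite wt3S [r + _]addnC mulnC modnMDl modn_small //.
by rewrite divnMDl // divn_small // addn0.
Qed.

Lemma wt3_lt3 n c : c < 3 -> wt3 n.+1 c = c.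
Proof. by move=> c_lt3; rewrite -[c]addn0 -(muln0 3) wt3_digit // wt3_n0. Qed.

Lemma wt3_cat j n x y : x < 3 ^ j ->
  wt3 (j + n) (x + 3 ^ j * y) = wt3 j x + wt3 n y.
Proof.
elim: j x => [|j IHj] x x_lt.
  by move: x_lt; rewrite expn0 ltnS leqn0 => /eqP ->; rewrite wt3_0n mul1n.
have q_lt : x %/ 3 < 3 ^ j by rewrite ltn_divLR // mulnC -expnS.
have -> : x + 3 ^ j.+1 * y = x %% 3 + 3 * (x %/ 3 + 3 ^ j * y).
  by rewrite expnS {1}(divn_eq x 3); lia.
by rewrite addSn wt3_digit ?ltn_mod // IHj // wt3S addnA.
Qed.

Lemma wt3_three_blocks k x y c : x < 3 ^ k -> y < 3 ^ k -> c < 3 ->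
  wt3 (k + k.+1) (x + 3 ^ k * (y + 3 ^ k * c)) = wt3 k x + wt3 k y + c.
Proof.
by move=> x_lt y_lt c_lt; rewrite wt3_cat // -addn1 wt3_cat // wt3_lt3 // addnA.
Qed.

Lemma wt3_odd n x : x < 3 ^ n -> odd (wt3 n x) = odd x.
Proof.
elim: n x => [|n IHn] x x_lt.
  by move: x_lt; rewrite expn0 ltnS leqn0 => /eqP ->; rewrite wt3_0n.
have q_lt : x %/ 3 < 3 ^ n by rewrite ltn_divLR // mulnC -expnS.
by rewrite wt3S oddD IHn // [in RHS](divn_eq x 3) oddD oddM andbT addbC.
Qed.

Lemma wt3_complement n x : x < 3 ^ n -> wt3 n (3 ^ n - 1 - x) + wt3 n x = 2 * n.
Proof.
elim: n x => [|n IHn] x x_lt; first by rewrite !wt3_0n.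
have q_lt : x %/ 3 < 3 ^ n by rewrite ltn_divLR // mulnC -expnS.
have r_lt : x %% 3 < 3 by rewrite ltn_mod.
have -> : 3 ^ n.+1 - 1 - x = (2 - x %% 3) + 3 * (3 ^ n - 1 - x %/ 3).
  by rewrite expnS {1}(divn_eq x 3); lia.
rewrite wt3_digit; last by lia.
by rewrite wt3S; have := IHn _ q_lt; lia.
Qed.

Lemma pow3_odd_mod4 k : odd k -> 3 ^ k %% 4 = 3.
Proof.
move=> k_odd; rewrite -(odd_double_half k) k_odd add1n expnS -mul2n expnM.
by rewrite -modnMm -modnXm exp1n.
Qed.

Lemma modn_mul_odd_sub H c u : odd u -> c * u <= H ->
  ((H - c) * u) %% (2 * H) = H - c * u.
Proof.
move=> u_odd cu_le; have [-> | H_gt0] := posnP H; first by rewrite sub0n !mul0n mod0n.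
have Hu : H * u = u./2 * (2 * H) + H.
  by rewrite -{1}(odd_double_half u) u_odd -mul2n; lia.
rewrite mulnBl Hu -addnBA; last by lia.
by rewrite modnMDl modn_small //; lia.
Qed.

Lemma coprime_double_add v d : odd v -> v %% d = 1 -> coprime v (2 * (v + d)).
Proof.
move=> v_odd v_mod; rewrite coprimeMr coprimen2 v_odd /coprime.
by rewrite gcdnDl -gcdn_modl v_mod gcd1n.
Qed.

Section HalfModulus.

Variables k a : nat.
Hypothesis pow3_eq : 3 ^ k = 4 * a + 3.

Local Notation P := (3 ^ k).
Local Notation A := (2 * a + 1).
Local Notation H := (A + P * (A + P)).

Lemma pow3_double_pred : 3 ^ (k + k.+1) - 1 = 2 * H.
Proof. by rewrite addnS expnS expnD pow3_eq; nia. Qed.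

Lemma coprime_half_sub : coprime (H - (P + 1)) (2 * H).
Proof.
have v_eq : H - (P + 1) = (6 * a + 2) * (P + 1) + 1 by rewrite pow3_eq; lia.
have -> : 2 * H = 2 * (H - (P + 1) + (P + 1)) by rewrite pow3_eq; lia.
apply: coprime_double_add; first by rewrite v_eq pow3_eq; lia.
by rewrite v_eq modnMDl modn_small // pow3_eq; lia.
Qed.

Hypothesis k_gt1 : 1 < k.

Lemma pow3_ge9 : 9 <= P.
Proof. by rewrite -[9]/(3 ^ 2) leq_pexp2l. Qed.

Lemma half_sub_mul_mod u : odd u -> u <= A + 4 ->
  ((H - (P + 1)) * u) %% (2 * H) = H - (P + 1) * u.
Proof.
move=> u_odd u_le; apply: modn_mul_odd_sub => //.
have := leq_mul (leqnn (P + 1)) u_le; have := pow3_ge9; rewrite pow3_eq; nia.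
Qed.

Lemma wt3_half_sub_small u : odd u -> u <= A ->
  wt3 (k + k.+1) (H - (P + 1) * u) %% 4 = 1.
Proof.
move=> u_odd u_le; set D := A - u.
have D_lt : D < P by rewrite pow3_eq; lia.
have -> : H - (P + 1) * u = D + P * (D + P * 1).
  have A_eq : A = D + u by lia.
  by rewrite A_eq; lia.
rewrite wt3_three_blocks //.
have : ~~ odd (wt3 k D) by rewrite wt3_odd //; lia.
lia.
Qed.

Lemma wt3_half_sub_large c : 0 < c < P ->
  wt3 (k + k.+1) (H - (P + 1) * (A + c)) + wt3 k c.-1 + wt3 k c = 4 * k.
Proof.
move=> /andP[c_gt0 c_lt].
have -> : H - (P + 1) * (A + c) = (P - 1 - c.-1) + P * ((P - 1 - c) + P * 0).
  have [e e_eq] : exists e, P = c + e.+1 by exists (P - c.+1); lia.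
  by rewrite e_eq (_ : c + e.+1 - 1 - c.-1 = e.+1) 1?(_ : c + e.+1 - 1 - c = e); lia.
rewrite wt3_three_blocks; try lia.
have := @wt3_complement k c.-1; have := @wt3_complement k c; lia.
Qed.

Lemma wt3_half_sub u : odd u -> u <= A + 4 ->
  wt3 (k + k.+1) (H - (P + 1) * u) %% 4 = 1.
Proof.
move=> u_odd u_le; have [u_small | u_big] := leqP u A.
  exact: wt3_half_sub_small.
have [j k_eq] : exists j, k = j.+2 by exists (k - 2); lia.
have wt3_1 : wt3 k 1 = 1 by rewrite k_eq wt3_lt3.
have wt3_2 : wt3 k 2 = 2 by rewrite k_eq wt3_lt3.
have wt3_3 : wt3 k 3 = 1 by rewrite k_eq -[3]/(0 + 3 * 1) wt3_digit // wt3_lt3.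
have wt3_4 : wt3 k 4 = 2 by rewrite k_eq -[4]/(1 + 3 * 1) wt3_digit // wt3_lt3.
have := pow3_ge9; rewrite pow3_eq => a_ge.
have [-> | ->] : u = A + 2 \/ u = A + 4 by lia.
- by have := @wt3_half_sub_large 2; rewrite wt3_1 wt3_2 pow3_eq; lia.
- by have := @wt3_half_sub_large 4; rewrite wt3_3 wt3_4 pow3_eq; lia.
Qed.

End HalfModulus.

Theorem lemma42 (m : nat) :
  7 <= m -> m %% 4 = 3 ->
  let N := 3 ^ m - 1 in
  let v := (3 ^ m - 1) %/ 2 - 3 ^ ((m - 1) %/ 2) - 1 in
  coprime v N /\
  (forall i : nat, i <= (3 ^ ((m - 1) %/ 2) + 1) %/ 4 + 1 ->
     wt3 m ((v * (1 + 2 * i)) %% N) %% 4 = 1).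
Proof.
move=> m_ge7 m_mod4 N v; rewrite {}/N {}/v.
have [k m_eq] : exists k, m = k + k.+1 by exists (m %/ 2); lia.
have k_gt1 : 1 < k by lia.
have [a pow3_eq] : exists a, 3 ^ k = 4 * a + 3.
  exists (3 ^ k %/ 4); rewrite {1}(divn_eq (3 ^ k) 4) pow3_odd_mod4; lia.
have half_m_eq : (m - 1) %/ 2 = k by lia.
have bound_eq : (3 ^ k + 1) %/ 4 + 1 = a + 2 by rewrite pow3_eq; lia.
rewrite half_m_eq bound_eq m_eq (pow3_double_pred _ _ pow3_eq) mulKn // -subnDA.
split; first exact: coprime_half_sub.
move=> i i_le; have u_odd : odd (1 + 2 * i) by lia.
rewrite half_sub_mul_mod //; last by lia.
by apply: wt3_half_sub => //; lia.
Qed.
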